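(* Let $D\subset\mathbb{C}^n$ be a hyperconvex domain, $\mathscr{P}$ a priori data on $D$ with poles $\mathbf{Z}=\{\mathbf{z}_1,\dots,\mathbf{z}_p\}$, and $\Phi^D_{\mathscr{P},\max}$ a global Zhou weight related to $\mathscr{P}$ on $D$. Then for every $\psi\in\mathrm{PSH}^-(D)$, the inequality $\psi\le\sigma_{\mathbf{Z}}\big(\psi,\Phi^D_{\mathscr{P},\max}\big)\Phi^D_{\mathscr{P},\max}$ holds on $D$.
   Context: $\mathrm{PSH}^-(D)$: negative plurisubharmonic functions on $D$. Hyperconvex: admits a continuous plurisubharmonic exhaustion $\varrho:D\to(-\infty,0)$. A priori data $\mathscr{P}=\big(\{\mathbf{z}_i\},\{\mathbf{f}_{0,i}\},\{u_{0,i}\}\big)$: distinct $\mathbf{z}_1,\dots,\mathbf{z}_p\in D$, holomorphic vectors $\mathbf{f}_{0,i}$ near $\mathbf{z}_i$ ($|\mathbf f|^2=\sum_j|f_j|^2$), plurisubharmonic $u_{0,i}$ near $\mathbf{z}_i$ with $|\mathbf{f}_{0,i}|^2e^{-2u_{0,i}}$ integrable near $\mathbf{z}_i$. Global Zhou weight related to $\mathscr{P}$ on $D$: $\Phi\in\mathrm{PSH}^-(D)$ such that (1) for large $N_i$, $|\mathbf{f}_{0,i}|^2e^{-2u_{0,i}}|z-\mathbf{z}_i|^{2N_i}e^{-2\Phi}$ is integrable near $\mathbf{z}_i$ for all $i$; (2) $|\mathbf{f}_{0,i}|^2e^{-2u_{0,i}-2\Phi}$ is not integrable near $\mathbf{z}_i$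 for all $i$; (3) any $\Psi\in\mathrm{PSH}^-(D)$ with $\Psi\ge\Phi$ and $|\mathbf{f}_{0,i}|^2e^{-2u_{0,i}-2\Psi}$ non-integrable near every $\mathbf{z}_i$ equals $\Phi$ on $D$. For plurisubharmonic $\psi$, $\sigma_{\mathbf{z}_i}(\psi,\Phi)=\sup\{c\ge0:\psi\le c\Phi+O(1)\text{ near }\mathbf{z}_i\}$ and $\sigma_{\mathbf{Z}}(\psi,\Phi)=\min_{1\le i\le p}\sigma_{\mathbf{z}_i}(\psi,\Phi)$. *)

(* C^n is modelled as ('rV[R]_n * 'rV[R]_n) = (real parts, imaginary parts),
   with its canonical (product/matrix) topology and normed R-module structure;
   R is an arbitrary realType (a model of the real numbers). *)
From HB Require Import structures.
From mathcomp Require Import all_boot all_order all_algebra.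
From mathcomp Require Import all_classical all_reals all_analysis.
Set Implicit Arguments. Unset Strict Implicit. Unset Printing Implicit Defensive.
Import Order.TTheory GRing.Theory Num.Theory.
Import numFieldNormedType.Exports.
Local Open Scope classical_set_scope.
Local Open Scope ring_scope.

Notation Cn R n := ('rV[R]_n * 'rV[R]_n)%type.

Section Defs.
Variable R : realType.

Definition sqnorm (n : nat) (z : Cn R n) : R :=
  \sum_(j < n) ((z.1 0 j) ^+ 2 + (z.2 0 j) ^+ 2).

(* multiplication by the imaginary unit i on C^n *)
Definition jmul (n : nat) (z : Cn R n) : Cn R n := (- z.2, z.1).

(* the point a + (s + i t) b of the complex line through a in direction b *)
Definition line_pt (n : nat) (a b : Cn R n) (s t : R) : Cn R n :=
  (a.1 + s *: b.1 - t *: b.2, a.2 + t *: b.1 + s *: b.2).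

(* holomorphic on an open set U: real (Frechet) differentiable at each point
   with complex-linear differential *)
Definition holomorphic_on (n m : nat) (U : set (Cn R n)) (f : Cn R n -> Cn R m) :=
  forall z, U z -> differentiable f z /\ forall v, 'd f z (jmul v) = jmul ('d f z v).

Definition holomorphic_near (n m : nat) (z0 : Cn R n) (f : Cn R n -> Cn R m) :=
  exists r : R, 0 < r /\ holomorphic_on (ball z0 r) f.

Definition usc_on (n : nat) (D : set (Cn R n)) (u : Cn R n -> \bar R) :=
  forall z, D z -> forall c : R, (u z < c%:E)%E -> \forall w \near z, (u w < c%:E)%E.

(* plurisubharmonic on the open set D (not identically -oo):
   usc, < +oo, and the sub-mean value inequality on every closed complex
   disc {a + lambda b : |lambda| <= 1} contained in D. *)
Definition psh_on (n : nat) (D : set (Cn R n)) (u : Cn R n -> \bar R) :=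
  [/\ forall z, D z -> (u z < +oo)%E,
      usc_on D u,
      forall a b : Cn R n,
        (forall s t : R, s ^+ 2 + t ^+ 2 <= 1 -> D (line_pt a b s t)) ->
        (u a <= ((2 * pi)^-1)%:E *
           \int[lebesgue_measure]_(t in `[0%R, (2 * pi)%R]) u (line_pt a b (cos t) (sin t)))%E
    & exists z, D z /\ u z != -oo%E].

Definition psh_near (n : nat) (z0 : Cn R n) (u : Cn R n -> \bar R) :=
  exists r : R, 0 < r /\ psh_on (ball z0 r) u.

Definition PSHneg (n : nat) (D : set (Cn R n)) (u : Cn R n -> \bar R) :=
  psh_on D u /\ forall z, D z -> (u z < 0)%E.

Definition domain (n : nat) (D : set (Cn R n)) :=
  [/\ open D, connected D & D !=set0].

(* hyperconvex domain: admits a continuous psh exhaustion rho : D -> (-oo,0),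
   i.e. every sublevel set {rho < c}, c < 0, is relatively compact in D *)
Definition hyperconvex (n : nat) (D : set (Cn R n)) :=
  domain D /\
  exists rho : Cn R n -> R,
    [/\ {within D, continuous rho},
        psh_on D (fun z => (rho z)%:E),
        forall z, D z -> rho z < 0
      & forall c : R, c < 0 ->
          exists K : set (Cn R n),
            [/\ compact K, K `<=` D & [set z | D z /\ rho z < c] `<=` K]].

(* Lebesgue integral of a nonnegative function over a cube of C^n = R^(2n),
   computed as an iterated integral over the 2n real coordinates (Tonelli). *)
Fixpoint iint (k : nat) (r : R) (F : (nat -> R) -> \bar R) (x : nat -> R) : \bar R :=
  match k with
  | 0 => F x
  | k'.+1 => (\int[lebesgue_measure]_(t in `[(- r)%R, r])
                iint k' r F (fun j => if j == k' then t else x j))%E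
  end.

Definition offset (n : nat) (x : nat -> R) : Cn R n :=
  (\row_(j < n) x j, \row_(j < n) x (n + j)%N).

Definition cube_integral (n : nat) (z0 : Cn R n) (r : R) (g : Cn R n -> \bar R) : \bar R :=
  iint (2 * n) r (fun x => g (z0 + offset n x)) (fun _ => 0).

Definition integrable_near (n : nat) (z0 : Cn R n) (g : Cn R n -> \bar R) :=
  exists r : R, 0 < r /\ (cube_integral z0 r g < +oo)%E.

Definition apriori_data (n p : nat) (D : set (Cn R n)) (zs : 'I_p -> Cn R n)
    (m : 'I_p -> nat) (f : forall i, Cn R n -> Cn R (m i))
    (u : 'I_p -> Cn R n -> \bar R) :=
  [/\ (0 < p)%N, injective zs & forall i, D (zs i)] /\
  [/\ forall i, holomorphic_near (zs i) (f i),
      forall i, psh_near (zs i) (u i)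
    & forall i, integrable_near (zs i)
        (fun z => ((sqnorm (f i z))%:E * expeR (- (2%:E * u i z)))%E)].

Definition zw_integrand (n p : nat) (m : 'I_p -> nat) (f : forall i, Cn R n -> Cn R (m i))
    (u : 'I_p -> Cn R n -> \bar R) (Psi : Cn R n -> \bar R) (i : 'I_p) :=
  fun z => ((sqnorm (f i z))%:E * expeR (- (2%:E * (u i z + Psi z))))%E.

Definition global_zhou_weight (n p : nat) (D : set (Cn R n)) (zs : 'I_p -> Cn R n)
    (m : 'I_p -> nat) (f : forall i, Cn R n -> Cn R (m i))
    (u : 'I_p -> Cn R n -> \bar R) (Phi : Cn R n -> \bar R) :=
  [/\ PSHneg D Phi,
      forall i, exists N0 : nat, forall N : nat, (N0 <= N)%N ->
        integrable_near (zs i)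
          (fun z => ((sqnorm (z - zs i) ^+ N)%:E * zw_integrand f u Phi i z)%E),
      forall i, ~ integrable_near (zs i) (zw_integrand f u Phi i)
    & forall Psi, PSHneg D Psi -> (forall z, D z -> (Phi z <= Psi z)%E) ->
        (forall i, ~ integrable_near (zs i) (zw_integrand f u Psi i)) ->
        forall z, D z -> Psi z = Phi z].

Definition sigma_pt (n : nat) (z0 : Cn R n) (psi Phi : Cn R n -> \bar R) : \bar R :=
  ereal_sup [set c%:E | c in [set c : R | 0 <= c /\
     exists C : R, \forall w \near z0, (psi w <= c%:E * Phi w + C%:E)%E]].

Definition sigma_Z (n p : nat) (zs : 'I_p -> Cn R n) (psi Phi : Cn R n -> \bar R) : \bar R :=
  \big[Order.min/+oo%E]_(i < p) sigma_pt (zs i) psi Phi.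

End Defs.

(* For 0 < c < sigma_Z(psi, Phi) put Psi := max(psi / c, Phi).  It is again a
   negative psh function and Psi >= Phi.  Near each pole psi <= c' Phi + O(1)
   with c' > c, hence psi / c <= Phi + O(1) and Psi <= Phi + K, so that
   e^{-2 Psi} >= e^{-2K} e^{-2 Phi}: Psi inherits the non-integrability of Phi.
   The maximality of the Zhou weight then forces Psi = Phi, i.e. psi <= c Phi,
   and letting c increase to sigma_Z gives the claim. *)

From HB Require Import structures.
From mathcomp Require Import all_boot all_order all_algebra.
From mathcomp Require Import all_classical all_reals all_analysis.
From mathcomp Require Import lra.
Import Order.TTheory GRing.Theory Num.Theory.
Import numFieldNormedType.Exports.

Set Implicit Arguments.
Unset Strict Implicit.
Unset Printing Implicit Defensive.
Local Open Scope classical_set_scope.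
Local Open Scope ring_scope.

Section integral_without_measurability.
Local Open Scope ereal_scope.
Context d (T : measurableType d) (R : realType).
Variable mu : {measure set T -> \bar R}.
Implicit Types (D E : set T) (f g : T -> \bar R).
Import HBNNSimple.

(* For a nonnegative integrand the integral is this supremum ([ge0_integralE]);
   monotonicity and scaling follow from it with no measurability assumption,
   which is not available for the (merely usc) functions met below. *)
Definition lower_sintegral f := ereal_sup [set sintegral mu h |
  h in [set h : {nnsfun T >-> R} | forall x, (h x)%:E <= f x]].

Lemma le_lower_sintegral f g :
  (forall x, f x <= g x) -> lower_sintegral f <= lower_sintegral g.
Proof.
move=> fg; apply: ge_ereal_sup => _ [h hf <-]; apply: ereal_sup_ubound.
by exists h => // x; exact: le_trans (hf x) (fg x).
Qed.

Lemma lower_sintegralZl_le (a : R) f : (0 < a)%R ->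
  lower_sintegral (fun x => a%:E * f x) <= a%:E * lower_sintegral f.
Proof.
move=> a0; apply: ge_ereal_sup => _ [h hf <-].
have ia0 : (0 <= a^-1)%R by rewrite invr_ge0 ltW.
pose h' := scale_nnsfun h ia0.
have -> : sintegral mu h = sintegral mu (cst a \* h')%R.
  by apply: eq_sintegral => x /=; rewrite mulrA mulfV ?gt_eqF// mul1r.
rewrite sintegralrM lee_pmul2l ?lte_fin//; apply: ereal_sup_ubound.
by exists h' => // x /=; rewrite EFinM lee_pdivrMl.
Qed.

Lemma lower_sintegralZl (a : R) f : (0 < a)%R ->
  lower_sintegral (fun x => a%:E * f x) = a%:E * lower_sintegral f.
Proof.
move=> a0; apply/eqP; rewrite eq_le lower_sintegralZl_le //= -lee_pdivlMl //.
have := @lower_sintegralZl_le a^-1 (fun x => a%:E * f x); rewrite invr_gt0 => /(_ a0).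
by under eq_fun do rewrite muleA -EFinM mulVf ?gt_eqF// mul1e.
Qed.

Lemma ge0_le_integral' D f g : (forall x, D x -> 0 <= f x) ->
  (forall x, D x -> f x <= g x) -> \int[mu]_(x in D) f x <= \int[mu]_(x in D) g x.
Proof.
move=> f0 fg; have g0 x : D x -> 0 <= g x by move=> Dx; exact: le_trans (f0 _ Dx) (fg _ Dx).
rewrite !ge0_integralE //; apply: le_lower_sintegral => x.
by rewrite /patch; case: ifP => // /set_mem; exact: fg.
Qed.

Lemma ge0_integralZl' D f (a : R) : (0 < a)%R -> (forall x, D x -> 0 <= f x) ->
  \int[mu]_(x in D) (a%:E * f x) = a%:E * \int[mu]_(x in D) f x.
Proof.
move=> a0 f0; rewrite !ge0_integralE //; last first.
  by move=> x Dx; rewrite mule_ge0 ?f0 // lee_fin ltW.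
rewrite -lower_sintegralZl //; congr lower_sintegral; apply: funext => x.
by rewrite /patch; case: ifP; rewrite ?mule0.
Qed.

Lemma ge0_subset_integral' D E f : D `<=` E -> (forall x, E x -> 0 <= f x) ->
  \int[mu]_(x in D) f x <= \int[mu]_(x in E) f x.
Proof.
move=> DE f0; rewrite !ge0_integralE // => [|x /DE]; last exact: f0.
apply: le_lower_sintegral => x; rewrite /patch; case: ifP => [/set_mem/DE Ex|_].
  by have /mem_set -> := Ex.
by case: ifP => // /set_mem; exact: f0.
Qed.

Lemma le0_integralE D f : (forall x, D x -> f x <= 0) ->
  \int[mu]_(x in D) f x = - \int[mu]_(x in D) - f x.
Proof.
move=> f0; rewrite -integral_ge0N => [|x Dx]; last by rewrite oppe_ge0 f0.
by apply: eq_integral => x _; rewrite oppeK.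
Qed.

Lemma le0_le_integral' D f g : (forall x, D x -> g x <= 0) ->
  (forall x, D x -> f x <= g x) -> \int[mu]_(x in D) f x <= \int[mu]_(x in D) g x.
Proof.
move=> g0 fg; have f0 x : D x -> f x <= 0 by move=> Dx; exact: le_trans (fg _ Dx) (g0 _ Dx).
rewrite (le0_integralE f0) (le0_integralE g0) leeN2.
by apply: ge0_le_integral' => x Dx; rewrite ?leeN2 ?oppe_ge0 ?fg ?g0.
Qed.

Lemma le0_integralZl' D f (a : R) : (0 < a)%R -> (forall x, D x -> f x <= 0) ->
  \int[mu]_(x in D) (a%:E * f x) = a%:E * \int[mu]_(x in D) f x.
Proof.
move=> a0 f0; rewrite (le0_integralE f0) le0_integralE => [|x Dx]; last first.
  by rewrite mule_ge0_le0 ?f0 // lee_fin ltW.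
rewrite muleN -ge0_integralZl' // => [|x Dx]; last by rewrite oppe_ge0 f0.
by congr (- _); apply: eq_integral => x _; rewrite muleN.
Qed.

End integral_without_measurability.

Section iterated_integral.
Local Open Scope ereal_scope.
Variable R : realType.
Implicit Types (F G : (nat -> R) -> \bar R) (r : R).

Lemma iint_ge0 k r F x : (forall y, 0 <= F y) -> 0 <= iint k r F x.
Proof.
move=> F0; elim: k x => [|k IH] x /=; first exact: F0.
by apply: integral_ge0 => t _; exact: IH.
Qed.

Lemma le_iint k r F G x : (forall y, 0 <= F y) ->
  (forall y, (forall j, (j < k)%N -> (- r <= y j <= r)%R) ->
             (forall j, (k <= j)%N -> y j = x j) -> F y <= G y) ->
  iint k r F x <= iint k r G x.
Proof.
move=> F0; elim: k x => [|k IH] x /= FG.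
  by apply: FG => // j; rewrite ltn0.
apply: ge0_le_integral' => [t _|t]; first exact: iint_ge0.
rewrite /= in_itv /= => /andP[t1 t2].
apply: IH => y yk ykx; apply: FG => j jk.
  move: jk; rewrite ltnS leq_eqVlt => /orP[/eqP ->|]; last exact: yk.
  by rewrite ykx // eqxx t1 t2.
by rewrite ykx ?(ltnW jk) //= ifN // gtn_eqF.
Qed.

Lemma iintZl k r F x (a : R) : (0 < a)%R -> (forall y, 0 <= F y) ->
  iint k r (fun y => a%:E * F y) x = a%:E * iint k r F x.
Proof.
move=> a0 F0; elim: k x => [|k IH] x //=.
rewrite -ge0_integralZl' // => [|t _]; last exact: iint_ge0.
by apply: eq_integral => t _; rewrite IH.
Qed.

Lemma le_iint_radius k r r' F x : (0 <= r' <= r)%R -> (forall y, 0 <= F y) ->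
  iint k r' F x <= iint k r F x.
Proof.
move=> /andP[r'0 r'r] F0; elim: k x => [|k IH] x //=.
set J := fun r1 r2 : R => \int[lebesgue_measure]_(t in `[(- r1)%R, r1])
  iint k r2 F (fun j => if j == k then t else x j).
apply: (@le_trans _ _ (J r' r)).
  by apply: ge0_le_integral' => t _; [exact: iint_ge0 | exact: IH].
apply: ge0_subset_integral' => [t|t _]; last exact: iint_ge0.
rewrite /= !in_itv /= => /andP[t1 t2].
by rewrite (le_trans _ t1) ?(le_trans t2) // lerN2.
Qed.

End iterated_integral.

Lemma offset_in_ball (R : realType) (n : nat) (z0 : Cn R n) (e r : R) (y : nat -> R) :
  0 <= r < e -> (forall j, (j < 2 * n)%N -> - r <= y j <= r) ->
  ball z0 e (z0 + offset n y).
Proof.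
move=> /andP[r0 re] hy; have e0 : 0 < e by exact: le_lt_trans r0 re.
split; split => // i j; rewrite ?ord1 /= !mxE /ball /= opprD addrA subrr add0r normrN.
- rewrite (le_lt_trans _ re) // ler_norml hy // mul2n -addnn ltn_addr //.
- rewrite (le_lt_trans _ re) // ler_norml hy // mul2n -addnn ltn_add2l //.
Qed.

Section integrable_near.
Local Open Scope ereal_scope.

Lemma integrable_near_le (R : realType) (n : nat) (z0 : Cn R n)
    (g h : Cn R n -> \bar R) (k : R) :
  (0 < k)%R -> (forall w, 0 <= g w) -> (forall w, 0 <= h w) ->
  (\forall w \near z0, g w <= k%:E * h w) ->
  integrable_near z0 h -> integrable_near z0 g.
Proof.
move=> k0 g0 h0 /nbhs_ballP[rho rho0 gh] [r [r0 hr]].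
have r'0 : (0 < Num.min r (rho / 2))%R by rewrite lt_min r0 divr_gt0.
have r'rho : (0 <= Num.min r (rho / 2) < rho)%R.
  by rewrite ltW //= gt_min ltr_pdivrMr // ltr_pMr // ltr1n orbT.
exists (Num.min r (rho / 2))%R; split => //.
apply: (@le_lt_trans _ _ (k%:E * cube_integral z0 (Num.min r (rho / 2))%R h)).
  rewrite /cube_integral -iintZl //.
  apply: le_iint => [y|y ybd _]; first exact: g0.
  by apply: gh; exact: offset_in_ball r'rho ybd.
rewrite lte_mul_pinfty // ?lee_fin ?ltW //.
apply: le_lt_trans hr; apply: le_iint_radius => //.
by rewrite ltW //= ge_min lexx.
Qed.

End integrable_near.

Section psh_neg_closure.
Local Open Scope ereal_scope.
Variables (R : realType) (n : nat) (D : set (Cn R n)).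
Implicit Types (u v : Cn R n -> \bar R).

Lemma PSHnegZ (a : R) u : (0 < a)%R ->
  PSHneg D u -> PSHneg D (fun z => a%:E * u z).
Proof.
move=> a0 [[_ uscu subu [z0 [Dz0 uz0]]] u0].
have au0 z : D z -> a%:E * u z < 0 by move=> Dz; rewrite pmule_rlt0 ?lte_fin ?u0.
split => //; split.
- by move=> z /au0 /lt_trans; apply; rewrite ltey.
- move=> z Dz c; rewrite -lte_pdivlMl // -EFinM => /(uscu z Dz).
  by apply: filterS => w; rewrite EFinM lte_pdivlMl.
- move=> b e disc; rewrite le0_integralZl' // => [|t _]; last first.
    by apply/ltW/u0/disc; rewrite cos2Dsin2.
  rewrite muleCA; apply: lee_wpmul2l; [by rewrite lee_fin ltW | exact: subu].
- by exists z0; split => //; move: uz0 (u0 _ Dz0); case: (u z0).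
Qed.

Lemma PSHneg_max u v : PSHneg D u -> PSHneg D v ->
  PSHneg D (fun z => maxe (u z) (v z)).
Proof.
move=> [[_ uscu subu [z0 [Dz0 uz0]]] u0] [[_ uscv subv _] v0].
have max0 z : D z -> maxe (u z) (v z) < 0 by move=> Dz; rewrite gt_max u0 ?v0.
split => //; split.
- by move=> z /max0 /lt_trans; apply; rewrite ltey.
- move=> z Dz c; rewrite gt_max => /andP[uc vc].
  near=> w; rewrite gt_max; apply/andP; split; near: w; [exact: uscu | exact: uscv].
- move=> a b disc.
  have le_mean w : (forall z, D z -> w z <= maxe (u z) (v z)) ->
      ((2 * pi)^-1)%:E * \int[lebesgue_measure]_(t in `[0%R, (2 * pi)%R])
        w (line_pt a b (cos t) (sin t)) <=
      ((2 * pi)^-1)%:E * \int[lebesgue_measure]_(t in `[0%R, (2 * pi)%R])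
        maxe (u (line_pt a b (cos t) (sin t))) (v (line_pt a b (cos t) (sin t))).
    move=> wle; apply: lee_wpmul2l; first by rewrite lee_fin invr_ge0 mulr_ge0 ?pi_ge0.
    have Dt t : D (line_pt a b (cos t) (sin t)) by apply: disc; rewrite cos2Dsin2.
    by apply: le0_le_integral' => t _; [exact/ltW/max0 | exact: wle].
  rewrite ge_max; apply/andP; split.
  + by apply: le_trans (subu _ _ disc) (le_mean _ _) => z _; rewrite le_max lexx.
  + by apply: le_trans (subv _ _ disc) (le_mean _ _) => z _; rewrite le_max lexx orbT.
- exists z0; split => //; apply: contra uz0 => /eqP max_ninf.
  by rewrite -leeNy_eq -max_ninf le_max lexx.
Unshelve. all: by end_near.
Qed.

End psh_neg_closure.

Section zhou_weight.
Local Open Scope ereal_scope.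
Variable R : realType.

Lemma lee_pdivl_affine (c c' C : R) (p phi : \bar R) : (0 < c <= c')%R ->
  phi <= 0 -> p <= c'%:E * phi + C%:E -> c^-1%:E * p <= phi + (c^-1 * C)%:E.
Proof.
move=> /andP[c0 cc'] phi0 pb; rewrite lee_pdivrMl // muleDr ?fin_num_adde_defl //.
rewrite -EFinM mulrA divff ?gt_eqF // mul1r; apply: le_trans pb _; rewrite leeD2r //.
by rewrite -leeN2 -!muleN; apply: lee_wpmul2r; rewrite ?oppe_ge0 ?lee_fin.
Qed.

Lemma lee_mul_npos_approx (s x y : \bar R) : x <= 0 -> y <= 0 ->
  (forall c : R, (0 < c)%R -> c%:E < s -> x <= c%:E * y) -> x <= s * y.
Proof.
move=> x0 y0 xcy; have [s0|s_gt0] := leP s 0.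
  by apply: le_trans x0 _; rewrite mule_le0.
case: x x0 xcy => [x| |] x0 xcy; rewrite ?leNye //.
have [c c0 cs] : exists2 c : R, (0 < c)%R & c%:E < s.
  case: s s_gt0 {xcy} => [s| |] // s0; last by exists 1%R; rewrite ?ltry.
  by exists (s / 2)%R; rewrite ?lte_fin ?divr_gt0 // ltr_pdivrMr // ltr_pMr // ltr1n.
case: y y0 xcy => [y| |] // + xcy; last first.
  by have := xcy c c0 cs; rewrite muleC gt0_mulNye.
rewrite lee_fin le_eqVlt => /orP[/eqP ->|y0]; first by rewrite mule0.
have xcy' c' : (0 < c')%R -> c'%:E < s -> (c' <= x / y)%R.
  by move=> c'0 c's; rewrite ler_ndivlMr // -lee_fin EFinM; exact: xcy.
have xy0 : (0 <= x / y)%R.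
  by rewrite -divrNN; apply: divr_ge0; rewrite oppr_ge0 ?(ltW y0) // -lee_fin.
case: s s_gt0 {cs xcy} xcy' => [s| |] // _ xcy'; last first.
  by move: (ltr_wpDl xy0 ltr01) => /xcy'; rewrite ltry gerDl ler10 => /(_ isT).
rewrite -EFinM lee_fin -ler_ndivlMr //; apply/unstable.ler_ltP => c' c's.
by have [/le_trans->|c'0] := leP c' 0%R; last exact: xcy'.
Qed.

Lemma sigma_pt_gt_bound (n : nat) (z0 : Cn R n) (psi Phi : Cn R n -> \bar R) (c : R) :
  (0 < c)%R -> c%:E < sigma_pt z0 psi Phi -> (\forall w \near z0, Phi w <= 0) ->
  exists K : R, \forall w \near z0, c^-1%:E * psi w <= Phi w + K%:E.
Proof.
move=> c0 /ereal_sup_gt[_ [c' [_ [C psiC]] <-]]; rewrite lte_fin => cc' Phi0.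
exists (c^-1 * C)%R; near=> w; apply: (@lee_pdivl_affine c c' C).
- by rewrite c0 ltW.
- by near: w.
- by near: w.
Unshelve. all: by end_near.
Qed.

Lemma expeR_shift (K : R) (x y : \bar R) : y <= x + K%:E ->
  expeR (- (2%:E * x)) <= (expR (2 * K))%:E * expeR (- (2%:E * y)).
Proof.
case: x => [x| |]; case: y => [y| |] //= yx.
- rewrite -EFinM lee_fin -expRD ler_expR; rewrite -EFinD lee_fin in yx; lra.
all: rewrite ?(muleC 2%:E) ?gt0_mulNye ?gt0_mulye //=.
all: rewrite ?mule0 ?lee_fin ?mulr_ge0 ?expR_ge0 //.
all: by rewrite muleC gt0_mulye ?lte_fin ?expR_gt0 ?leey.
Qed.

Variables (n p : nat) (zs : 'I_p -> Cn R n) (m : 'I_p -> nat).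
Variables (f : forall i, Cn R n -> Cn R (m i)) (u : 'I_p -> Cn R n -> \bar R).

Lemma zw_integrand_ge0 Psi i z : 0 <= zw_integrand f u Psi i z.
Proof.
rewrite mule_ge0 ?expeR_ge0 // lee_fin sumr_ge0 // => j _.
by rewrite addr_ge0 ?sqr_ge0.
Qed.

Lemma zw_integrand_le Phi Psi (K : R) i z : Psi z <= Phi z + K%:E ->
  zw_integrand f u Phi i z <= (expR (2 * K))%:E * zw_integrand f u Psi i z.
Proof.
move=> PsiK; rewrite /zw_integrand muleCA lee_wpmul2l ?lee_fin ?sumr_ge0 //.
  by move=> j _; rewrite addr_ge0 ?sqr_ge0.
by apply: expeR_shift; rewrite -addeA leeD2l.
Qed.

Lemma le_scaled_zhou_weight (D : set (Cn R n)) (Phi psi : Cn R n -> \bar R) (c : R) :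
  open D -> (forall i, D (zs i)) -> global_zhou_weight D zs f u Phi ->
  PSHneg D psi -> (0 < c)%R -> (forall i, c%:E < sigma_pt (zs i) psi Phi) ->
  forall z, D z -> psi z <= c%:E * Phi z.
Proof.
move=> Dop Dzs [PhiN _ Phi_nonint Phi_max] psiN c0 c_sigma.
pose Psi z := maxe (c^-1%:E * psi z) (Phi z).
have PsiN : PSHneg D Psi.
  by apply: PSHneg_max => //; apply: PSHnegZ; rewrite ?invr_gt0.
have Phi_le_Psi z : D z -> Phi z <= Psi z by rewrite le_max lexx orbT.
have Psi_nonint i : ~ integrable_near (zs i) (zw_integrand f u Psi i).
  move=> Psi_int; apply: (Phi_nonint i).
  have Dnear : \forall w \near zs i, D w by apply: open_nbhs_nbhs.
  have [K psiK] := sigma_pt_gt_bound c0 (c_sigma i)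
    (filterS (fun w Dw => ltW (PhiN.2 w Dw)) Dnear).
  pose K' := Num.max K 0%R.
  apply: (integrable_near_le (k := expR (2 * K'))) Psi_int => //;
    [exact: expR_gt0 | exact: zw_integrand_ge0 | exact: zw_integrand_ge0 |].
  near=> w; apply: zw_integrand_le; rewrite ge_max; apply/andP; split.
    apply: le_trans (_ : Phi w + K%:E <= _); first by near: w.
    by rewrite leeD2l // lee_fin le_max lexx.
  by rewrite leeDl // lee_fin le_max lexx orbT.
move=> z Dz; rewrite -lee_pdivrMl // -(Phi_max _ PsiN Phi_le_Psi Psi_nonint z Dz).
by rewrite le_max lexx.
Unshelve. all: by end_near.
Qed.

End zhou_weight.

Theorem proposition1p9 (R : realType) (n : nat) (D : set (Cn R n)) (p : nat)
    (zs : 'I_p -> Cn R n) (m : 'I_p -> nat) (f : forall i, Cn R n -> Cn R (m i))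
    (u : 'I_p -> Cn R n -> \bar R) (Phi : Cn R n -> \bar R) :
  (0 < n)%N ->
  hyperconvex D ->
  apriori_data D zs f u ->
  global_zhou_weight D zs f u Phi ->
  forall psi : Cn R n -> \bar R, PSHneg D psi ->
  forall z, D z -> (psi z <= sigma_Z zs psi Phi * Phi z)%E.
Proof.
move=> _ [[Dop _ _] _] [[_ _ Dzs] _] GZ psi psiN z Dz.
have [[_ Phi0] _ _ _] := GZ.
apply: lee_mul_npos_approx; [exact/ltW/psiN.2 | exact/ltW/Phi0 |].
move=> c c0 c_sigma; apply: (le_scaled_zhou_weight Dop Dzs GZ psiN c0) => // i.
by apply: lt_le_trans c_sigma _; exact: bigmin_le_cond.
Qed.
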